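(* Let $T$ be a fair transition path, $p\in\mathbb{P}$ a nonfaulty proposer, $Q\in\mathcal{Q}$ a quorum all of whose members are nonfaulty, and $b\in\mathcal{B}$ a proposal number satisfying P1 and P2. If at some index $i$ of $T$ the proposer $p$ is ready to send prepare ($1a$) messages with proposal number $b$ to all members of $Q$, then there is an index $j$ such that in the configuration at index $j$ of $T$, $p$ has received promises ($1b$ messages) for $b$ from all members of $Q$.
   Context: Setting: the Synod consensus protocol modeled in a failure-aware actor model. An actor configuration is $\langle\alpha\,\|\,\bar\alpha\,\|\,\mu\rangle$ where $\alpha$ maps available actors to their states, $\bar\alpha$ maps failed actors to their states (states persist across failure), and $\mu$ is the multiset of messages en route. Transitions are base-level ($\mathbf{snd}$: an actor puts a message into $\mu$; $\mathbf{rcv}$: an actor removes a message addressed to it from $\mu$ and processes it; also $\mathbf{fun},\mathbf{new}$), which can only be taken by an available actor, and meta-level ($\mathbf{stp}$: an available actor becomes failed; $\mathbf{bgn}$: a failed actor becomes available). A transition path is a sequence of configurations indexed by natural numbers (logical time), each obtained from the previous by a transition; messages are never lost. Actors are partitioned into proposers $\mathbb{P}$ and acceptors $\mathbb{A}$; a quorum is a nonempty subset of $\mathbb{A}$. A message is a tuple $\langle s,r,k,b,v\rangle$ (sender, receiver, kind $k\in\{1a,1b,2a,2b\}$ = prepare, promise, accept, voted; proposal number $b$; value $v$). The local state of actor $x$ in configuration $\kappa$ consists of the set of received but not yet responded-to messages, the highest proposal number seen, and the value of the highest-numbered accepted proposal. Fair transition paths satisfy: if a $\mathbf{snd}$ or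 $\mathbf{rcv}$ transition is enabled for an actor at some index, then either it occurs at some later index or from some later index on it is permanently disabled. Protocol rules: an available acceptor holding an unresponded $1a$ message with number $b$ greater than its highest seen number becomes ready to send a $1b$ (promise) to the sender carrying $b$ and its highest accepted proposal number and value; a proposer that has received $1b$ messages for $b$ from all members of a quorum $Q$ becomes ready to send $2a$ messages with $b$ and a value chosen from its configuration to all members of $Q$; an available acceptor holding an unresponded $2a$ message with number $b$ at least its highest seen number becomes ready to send a $2b$ message with $b$ and the value to the sender; if a message addressed to an available actor is in $\mu$, a $\mathbf{rcv}$ of it is enabled. An actor $x$ is nonfaulty if: $x$ eventually becomes available whenever there is a message en route that $x$ must receive; $x$ eventually becomes available whenever its local state dictates it must send a message; and any enabled $\mathbf{snd}$ or $\mathbf{rcv}$ transition of $x$ either eventually occurs or is infinitely often enabled. A proposal number $b$ satisfies P1 and P2 if whenever an acceptor receives a prepare message with $b$, $b$ is greater than all proposal numbers that acceptor has previously seen, and whenever an acceptor receives an accept message with $b$, $b$ is greater than or equal to all proposal numbers it has previously seen. *)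

From Stdlib Require Import List Arith RelationClasses.
Import ListNotations.
Set Implicit Arguments.

(* Message kinds: 1a = prepare, 1b = promise, 2a = accept, 2b = voted. *)
Inductive kind := K1a | K1b | K2a | K2b.

Section Synod.
(* P = proposers, A = acceptors (the actors are partitioned: Actor = P + A),
   B = proposal numbers (ordered by lt), V = values. *)
Context {P A B V : Type} (lt : B -> B -> Prop).

Definition actor := (P + A)%type.

(* The "value" component is split in two fields:
   [mval] (the value of a 2a/2b message) and [macc] (for a 1b message: the
   number and value of the highest-numbered proposal accepted by the sender,
   if any). *)
Record msg := Msg {
  ms : actor; mr : actor; mk : kind; mb : B;
  mval : option V; macc : option (B * V) }.

Definition msg1a (p : P) (a : A) (b : B) : msg :=
  Msg (inl p) (inr a) K1a b None None.

Record lstate := LS {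
  unresp : list msg;          (* received but not yet responded-to messages *)
  hs     : option B;          (* highest proposal number seen (None = none) *)
  acc    : option (B * V);    (* highest-numbered accepted proposal          *)
  prep   : list msg           (* prepare (1a) messages a proposer has decided
                                 to send and not yet sent                    *)
}.

Definition gt_seen (b : B) (h : option B) : Prop :=
  match h with None => True | Some h => lt h b end.
Definition ge_seen (b : B) (h : option B) : Prop :=
  match h with None => True | Some h => ~ lt b h end.

Definition remove_one {X} (x : X) (l l' : list X) : Prop :=
  exists l1 l2, l = l1 ++ x :: l2 /\ l' = l1 ++ l2.

Definition quorum (Q : list A) : Prop := Q <> [].

(* Protocol rules for sending: [send_rule x s m s'] means that an actor [x]
   in local state [s] is ready to send [m], and that sending it leaves
   local state [s']. *)
Definition send_rule (x : actor) (s : lstate) (m : msg) (s' : lstate) : Prop :=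
  ms m = x /\
  match x, mk m with
  | inl p, K1a =>
      (exists a, mr m = inr a) /\
      mval m = None /\ macc m = None /\
      In m (prep s) /\
      exists pr', remove_one m (prep s) pr' /\
        s' = LS (unresp s) (hs s) (acc s) pr'
  | inr a, K1b =>
      (* acceptor holding an unresponded 1a message (that passed the
         "greater than highest seen" test, see recv_rule) promises *)
      exists m0, In m0 (unresp s) /\ mk m0 = K1a /\ mr m0 = x /\
        mr m = ms m0 /\ mb m = mb m0 /\ mval m = None /\ macc m = acc s /\
        exists u', remove_one m0 (unresp s) u' /\
          s' = LS u' (hs s) (acc s) (prep s)
  | inl p, K2a =>
      (* proposer with 1b messages for b from all members of a quorum Q
         sends 2a messages with b and a value chosen by the Paxos rule *)
      exists (Q : list A) (v : V),
        quorum Q /\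
        (forall a, In a Q -> exists m1, In m1 (unresp s) /\ mk m1 = K1b /\
            ms m1 = inr a /\ mr m1 = x /\ mb m1 = mb m) /\
        (exists a, In a Q /\ mr m = inr a) /\
        mval m = Some v /\ macc m = None /\
        (let S m1 := In m1 (unresp s) /\ mk m1 = K1b /\ mb m1 = mb m /\
                     exists a, In a Q /\ ms m1 = inr a in
         (forall m1, S m1 -> macc m1 = None) \/
         (exists m1 b0, S m1 /\ macc m1 = Some (b0, v) /\
            forall m2 b2 v2, S m2 -> macc m2 = Some (b2, v2) -> ~ lt b0 b2)) /\
        s' = s
  | inr a, K2b =>
      exists m0 v, In m0 (unresp s) /\ mk m0 = K2a /\ mr m0 = x /\
        mval m0 = Some v /\
        mr m = ms m0 /\ mb m = mb m0 /\ mval m = Some v /\ macc m = None /\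
        exists u', remove_one m0 (unresp s) u' /\
          s' = LS u' (hs s) (Some (mb m0, v)) (prep s)
  | _, _ => False
  end.

Definition recv_rule (x : actor) (s : lstate) (m : msg) (s' : lstate) : Prop :=
  match x with
  | inl _ => s' = LS (m :: unresp s) (hs s) (acc s) (prep s)
  | inr _ =>
      match mk m with
      | K1a => (gt_seen (mb m) (hs s) /\
                  s' = LS (m :: unresp s) (Some (mb m)) (acc s) (prep s))
               \/ (~ gt_seen (mb m) (hs s) /\ s' = s)
      | K2a => (ge_seen (mb m) (hs s) /\
                  s' = LS (m :: unresp s) (Some (mb m)) (acc s) (prep s))
               \/ (~ ge_seen (mb m) (hs s) /\ s' = s)
      | _ => s' = s
      end
  end.

(* Configuration <alpha || alpha-bar || mu>: every actor has a (persistent)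
   local state and is either available (up = true) or failed; mu is the
   multiset of messages en route. *)
Record config := Cfg {
  st : actor -> lstate;
  up : actor -> bool;
  mu : msg -> nat }.

Inductive label :=
  | Snd (x : actor) (m : msg)
  | Rcv (x : actor) (m : msg)
  | Fun (x : actor)
  | Stp (x : actor)
  | Bgn (x : actor).

Definition same_except {X Y} (x : X) (f g : X -> Y) : Prop :=
  forall y, y <> x -> g y = f y.

Definition step (k : config) (l : label) (k' : config) : Prop :=
  match l with
  | Snd x m =>
      up k x = true /\ send_rule x (st k x) m (st k' x) /\
      same_except x (st k) (st k') /\ up k' = up k /\
      mu k' m = S (mu k m) /\ same_except m (mu k) (mu k')
  | Rcv x m =>
      up k x = true /\ mr m = x /\ mu k m > 0 /\
      recv_rule x (st k x) m (st k' x) /\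
      same_except x (st k) (st k') /\ up k' = up k /\
      S (mu k' m) = mu k m /\ same_except m (mu k) (mu k')
  | Fun x =>
      (* internal step: a proposer decides to send prepare messages *)
      up k x = true /\ (exists p, x = inl p) /\
      (exists l, (forall m, In m l ->
                    exists a b, m = Msg x (inr a) K1a b None None) /\
         st k' x = LS (unresp (st k x)) (hs (st k x)) (acc (st k x))
                      (prep (st k x) ++ l)) /\
      same_except x (st k) (st k') /\ up k' = up k /\ mu k' = mu k
  | Stp x =>
      up k x = true /\ up k' x = false /\ same_except x (up k) (up k') /\
      st k' = st k /\ mu k' = mu k
  | Bgn x =>
      up k x = false /\ up k' x = true /\ same_except x (up k) (up k') /\
      st k' = st k /\ mu k' = mu k
  end.

Definition enabled (k : config) (l : label) : Prop := exists k', step k l k'.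

Definition path (T : nat -> config) (L : nat -> label) : Prop :=
  forall i, step (T i) (L i) (T (S i)).

Definition snd_or_rcv_of (x : actor) (l : label) : Prop :=
  exists m, l = Snd x m \/ l = Rcv x m.

Definition fair (T : nat -> config) (L : nat -> label) : Prop :=
  path T L /\
  forall x l i, snd_or_rcv_of x l -> enabled (T i) l ->
    (exists j, i <= j /\ L j = l) \/
    (exists j, i <= j /\ forall k, j <= k -> ~ enabled (T k) l).

Definition ready (s : lstate) (x : actor) (m : msg) : Prop :=
  exists s', send_rule x s m s'.

Definition nonfaulty (T : nat -> config) (L : nat -> label) (x : actor) : Prop :=
  (forall i, (exists m, mr m = x /\ mu (T i) m > 0) ->
             exists j, i <= j /\ up (T j) x = true) /\
  (forall i, (exists m, ready (st (T i) x) x m) ->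
             exists j, i <= j /\ up (T j) x = true) /\
  (forall l i, snd_or_rcv_of x l -> enabled (T i) l ->
     (exists j, i <= j /\ L j = l) \/
     (forall j, exists k, j <= k /\ enabled (T k) l)).

Definition P1 (T : nat -> config) (L : nat -> label) (b : B) : Prop :=
  forall i (a : A) m, L i = Rcv (inr a) m -> mk m = K1a -> mb m = b ->
    gt_seen b (hs (st (T i) (inr a))).
Definition P2 (T : nat -> config) (L : nat -> label) (b : B) : Prop :=
  forall i (a : A) m, L i = Rcv (inr a) m -> mk m = K2a -> mb m = b ->
    ge_seen b (hs (st (T i) (inr a))).

Definition has_promise (s : lstate) (p : P) (a : A) (b : B) : Prop :=
  exists m, In m (unresp s) /\ mk m = K1b /\ ms m = inr a /\ mr m = inl p /\
            mb m = b.

End Synod.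

(* Each of the four transmissions (p sends the prepare to a, a receives it,
   a sends its promise, p receives it) eventually happens.  A pending send
   (a message in [prep] or [unresp]) or a message en route persists until the
   corresponding transition is taken; nonfaultiness makes the actor available
   at some later time, when the transition is therefore enabled, and fairness
   together with nonfaultiness forces it to be taken.  P1 guarantees that the
   acceptor records the prepare instead of ignoring it.  Promises are never
   removed from p's state, so the latest of the times obtained for the members
   of Q works for all of them. *)

From Stdlib Require Import List RelationClasses Lia Classical ClassicalEpsilon.
Set Implicit Arguments.
Unset Strict Implicit.

Definition upd {X Y : Type} (f : X -> Y) (x : X) (y : Y) : X -> Y :=
  fun z => if excluded_middle_informative (z = x) then y else f z.

Lemma upd_same {X Y : Type} (f : X -> Y) x y : upd f x y x = y.
Proof. unfold upd; destruct excluded_middle_informative; congruence. Qed.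

Lemma upd_other {X Y : Type} (f : X -> Y) x y z : z <> x -> upd f x y z = f z.
Proof. unfold upd; destruct excluded_middle_informative; congruence. Qed.

Lemma remove_one_In {X : Type} (x y : X) l l' :
  remove_one x l l' -> In y l -> y <> x -> In y l'.
Proof.
  intros (l1 & l2 & -> & ->) Hy Hyx.
  apply in_app_or in Hy as [Hy | [Hy | Hy]]; apply in_or_app; auto; congruence.
Qed.

Lemma remove_one_exists {X : Type} (x : X) l : In x l -> exists l', remove_one x l l'.
Proof.
  intros Hx; destruct (in_split _ _ Hx) as (l1 & l2 & ->).
  exists (l1 ++ l2), l1, l2; auto.
Qed.

Section Progress.
Context {P A B V : Type} (lt : B -> B -> Prop).

Definition actor_of (l : @label P A B V) : actor :=
  match l with Snd x _ | Rcv x _ | Fun x | Stp x | Bgn x => x end.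

Definition reply (m0 m : @msg P A B V) : Prop :=
  mr m = ms m0 /\ mb m = mb m0 /\
  (mk m0 = K1a /\ mk m = K1b \/ mk m0 = K2a /\ mk m = K2b).

Lemma recv_rule_total x (s : @lstate P A B V) m : exists s', recv_rule lt x s m s'.
Proof.
  destruct x as [p | a]; simpl; [eauto |].
  destruct (mk m); eauto.
  - destruct (classic (gt_seen lt (mb m) (hs s))); eauto.
  - destruct (classic (ge_seen lt (mb m) (hs s))); eauto.
Qed.

Lemma snd_enabled (k : @config P A B V) x m :
  up k x = true -> ready lt (st k x) x m -> enabled lt k (Snd x m).
Proof.
  intros Hup [s' Hsend].
  exists (Cfg (upd (st k) x s') (up k) (upd (mu k) m (S (mu k m)))); simpl.
  rewrite !upd_same.
  repeat (split; [auto |]); intros y Hy; apply upd_other; auto.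
Qed.

Lemma rcv_enabled (k : @config P A B V) x m :
  up k x = true -> mr m = x -> mu k m > 0 -> enabled lt k (Rcv x m).
Proof.
  intros Hup Hr Hmu; destruct (recv_rule_total x (st k x) m) as [s' Hrecv].
  exists (Cfg (upd (st k) x s') (up k) (upd (mu k) m (pred (mu k m)))); simpl.
  rewrite !upd_same.
  repeat (split; [auto |]); try lia; intros y Hy; apply upd_other; auto.
Qed.

Lemma step_frame (k k' : @config P A B V) l x :
  step lt k l k' -> x <> actor_of l -> st k' x = st k x.
Proof.
  destruct l; simpl; intros Hstep Hx.
  - destruct Hstep as (_ & _ & Hframe & _); auto.
  - destruct Hstep as (_ & _ & _ & _ & Hframe & _); auto.
  - destruct Hstep as (_ & _ & _ & Hframe & _); auto.
  - destruct Hstep as (_ & _ & _ & -> & _); auto.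
  - destruct Hstep as (_ & _ & _ & -> & _); auto.
Qed.

Lemma prep_step (k k' : @config P A B V) l p m :
  step lt k l k' -> l <> Snd (inl p) m ->
  In m (prep (st k (inl p))) -> In m (prep (st k' (inl p))).
Proof.
  intros Hstep Hl Hm.
  destruct (classic (inl p = actor_of l)) as [Hx | Hx];
    [| rewrite (step_frame Hstep Hx); auto].
  destruct l as [x m' | x m' | x | x | x]; simpl in Hx, Hstep; subst x.
  - destruct Hstep as (_ & [_ Hsend] & _).
    destruct (mk m'); try contradiction.
    + destruct Hsend as (_ & _ & _ & _ & pr' & Hrem & ->); simpl.
      apply (remove_one_In Hrem); congruence.
    + destruct Hsend as (_ & _ & _ & _ & _ & _ & _ & _ & ->); auto.
  - destruct Hstep as (_ & _ & _ & -> & _); auto.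
  - destruct Hstep as (_ & _ & (l & _ & ->) & _); apply in_or_app; auto.
  - destruct Hstep as (_ & _ & _ & -> & _); auto.
  - destruct Hstep as (_ & _ & _ & -> & _); auto.
Qed.

Lemma unresp_step (k k' : @config P A B V) l x m0 :
  step lt k l k' -> In m0 (unresp (st k x)) ->
  In m0 (unresp (st k' x)) \/ exists m, l = Snd x m /\ reply m0 m.
Proof.
  intros Hstep Hm0.
  destruct (classic (x = actor_of l)) as [Hx | Hx];
    [| rewrite (step_frame Hstep Hx); auto].
  destruct l as [y m | y m | y | y | y]; simpl in Hx, Hstep; subst y.
  - destruct Hstep as (_ & [Hms Hsend] & _).
    destruct x, (mk m) eqn:Hk; try contradiction.
    + destruct Hsend as (_ & _ & _ & _ & pr' & _ & ->); auto.
    + destruct Hsend as (_ & _ & _ & _ & _ & _ & _ & _ & ->); auto.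
    + destruct Hsend as (m1 & _ & Hk1 & _ & Hr & Hb & _ & _ & u' & Hrem & ->).
      destruct (classic (m0 = m1)) as [-> | Hne].
      * right; exists m; repeat split; auto.
      * left; exact (remove_one_In Hrem Hm0 Hne).
    + destruct Hsend as (m1 & v & _ & Hk1 & _ & _ & Hr & Hb & _ & _ & u' & Hrem & ->).
      destruct (classic (m0 = m1)) as [-> | Hne].
      * right; exists m; repeat split; auto.
      * left; exact (remove_one_In Hrem Hm0 Hne).
  - destruct Hstep as (_ & _ & _ & Hrecv & _); left.
    destruct x; simpl in Hrecv; [rewrite Hrecv; simpl; auto |].
    destruct (mk m); try (rewrite Hrecv; auto);
      destruct Hrecv as [[_ ->] | [_ ->]]; simpl; auto.
  - destruct Hstep as (_ & _ & (l & _ & ->) & _); auto.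
  - destruct Hstep as (_ & _ & _ & -> & _); auto.
  - destruct Hstep as (_ & _ & _ & -> & _); auto.
Qed.

Lemma proposer_unresp_step (k k' : @config P A B V) l p :
  step lt k l k' -> incl (unresp (st k (inl p))) (unresp (st k' (inl p))).
Proof.
  intros Hstep m0 Hm0.
  destruct (unresp_step Hstep Hm0) as [| (m & -> & _ & _ & [[_ Hk] | [_ Hk]])]; auto;
    destruct Hstep as (_ & [_ Hsend] & _); rewrite Hk in Hsend; contradiction.
Qed.

Lemma mu_step (k k' : @config P A B V) l m :
  step lt k l k' -> l <> Rcv (mr m) m -> mu k m > 0 -> mu k' m > 0.
Proof.
  intros Hstep Hl Hmu; destruct l as [x m' | x m' | x | x | x]; simpl in Hstep.
  - destruct Hstep as (_ & _ & _ & _ & Hm' & Hframe).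
    destruct (classic (m = m')) as [-> | Hne]; [lia | rewrite Hframe; auto].
  - destruct Hstep as (_ & Hr & _ & _ & _ & _ & _ & Hframe).
    destruct (classic (m = m')) as [-> | Hne]; [subst; congruence | rewrite Hframe; auto].
  - destruct Hstep as (_ & _ & _ & _ & _ & ->); auto.
  - destruct Hstep as (_ & _ & _ & _ & ->); auto.
  - destruct Hstep as (_ & _ & _ & _ & ->); auto.
Qed.

Lemma sent_en_route (k k' : @config P A B V) x m :
  step lt k (Snd x m) k' -> ms m = x /\ mu k' m > 0.
Proof. intros (_ & [Hms _] & _ & _ & -> & _); split; [exact Hms | lia]. Qed.

Lemma ready_prepare (s : @lstate P A B V) p a b :
  ready lt s (inl p) (msg1a p a b) <-> In (msg1a p a b) (prep s).
Proof.
  split.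
  - intros (s' & _ & Hsend); simpl in Hsend; tauto.
  - intros Hin; destruct (remove_one_exists Hin) as [pr' Hrem].
    exists (LS (unresp s) (hs s) (acc s) pr'); split; [reflexivity |]; simpl.
    repeat split; eauto.
Qed.

Lemma ready_promise (s : @lstate P A B V) a m0 :
  In m0 (unresp s) -> mk m0 = K1a -> mr m0 = inr a ->
  ready lt s (inr a) (Msg (inr a) (ms m0) K1b (mb m0) None (acc s)).
Proof.
  intros Hin Hk Hr; destruct (remove_one_exists Hin) as [u' Hrem].
  exists (LS u' (hs s) (acc s) (prep s)); split; [reflexivity |]; simpl.
  exists m0; repeat split; eauto.
Qed.

Section Path.
Variables (T : nat -> @config P A B V) (L : nat -> @label P A B V).
Hypothesis fair_TL : fair lt T L.

Let path_TL : path lt T L := proj1 fair_TL.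

(* Fairness alone allows an enabled transition to become permanently disabled;
   the last clause of nonfaultiness excludes exactly that. *)
Lemma enabled_occurs x l i :
  nonfaulty lt T L x -> snd_or_rcv_of x l -> enabled lt (T i) l ->
  exists k, i <= k /\ L k = l.
Proof.
  intros (_ & _ & Hnf) Hxl Hen.
  destruct (proj2 fair_TL x l i Hxl Hen) as [| (j & _ & Hoff)]; auto.
  destruct (Hnf l i Hxl Hen) as [| Hinf]; auto.
  destruct (Hinf j) as (k & Hjk & Hk); exfalso; exact (Hoff k Hjk Hk).
Qed.

Lemma eventually_occurs x (E : label -> Prop) (R : config -> Prop) i :
  nonfaulty lt T L x ->
  (forall k l k', step lt k l k' -> ~ E l -> R k -> R k') ->
  (forall k, R k -> up k x = true ->
     exists l, E l /\ snd_or_rcv_of x l /\ enabled lt k l) ->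
  R (T i) -> (exists j, i <= j /\ up (T j) x = true) ->
  exists k, i <= k /\ E (L k).
Proof.
  intros Hnf Hinv Hen Hi (j & Hij & Hup).
  assert (Hlast : forall d, (exists k, i <= k < i + d /\ E (L k)) \/ R (T (i + d))).
  { induction d as [| d [(k & Hk & HE) | Hd]].
    - right; rewrite PeanoNat.Nat.add_0_r; exact Hi.
    - left; exists k; split; [lia | exact HE].
    - destruct (classic (E (L (i + d)))) as [HE | HE].
      + left; exists (i + d); split; [lia | exact HE].
      + right; rewrite PeanoNat.Nat.add_succ_r.
        exact (Hinv _ _ _ (path_TL _) HE Hd). }
  destruct (Hlast (j - i)) as [(k & Hk & HE) | Hj]; [exists k; split; [lia | auto] |].
  replace (i + (j - i)) with j in Hj by lia.
  destruct (Hen _ Hj Hup) as (l & HE & Hxl & Hl).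
  destruct (enabled_occurs Hnf Hxl Hl) as (k & Hjk & <-).
  exists k; split; [lia | exact HE].
Qed.

Lemma message_received x m i :
  nonfaulty lt T L x -> mr m = x -> mu (T i) m > 0 ->
  exists k, i <= k /\ L k = Rcv x m.
Proof.
  intros Hnf Hr Hmu.
  apply (eventually_occurs (E := fun l => l = Rcv x m) (R := fun k => mu k m > 0) Hnf);
    auto.
  - intros k l k' Hstep Hl; apply (mu_step Hstep); congruence.
  - intros k Hk Hup; exists (Rcv x m); repeat split; [exists m; auto |].
    exact (rcv_enabled Hup Hr Hk).
  - exact (proj1 Hnf i (ex_intro _ m (conj Hr Hmu))).
Qed.

Lemma prepare_sent p a b i :
  nonfaulty lt T L (inl p) ->
  ready lt (st (T i) (inl p)) (inl p) (msg1a p a b) ->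
  exists k, i <= k /\ L k = Snd (inl p) (msg1a p a b).
Proof.
  intros Hnf Hready.
  apply (eventually_occurs (E := fun l => l = Snd (inl p) (msg1a p a b))
           (R := fun k => In (msg1a p a b) (prep (st k (inl p)))) Hnf).
  - intros k l k' Hstep Hl; exact (prep_step Hstep Hl).
  - intros k Hk Hup; eexists; repeat split; [exists (msg1a p a b); auto |].
    apply (snd_enabled Hup), ready_prepare, Hk.
  - apply ready_prepare, Hready.
  - exact (proj1 (proj2 Hnf) i (ex_intro _ _ Hready)).
Qed.

Lemma promise_sent a m0 i :
  nonfaulty lt T L (inr a) -> mk m0 = K1a -> mr m0 = inr a ->
  In m0 (unresp (st (T i) (inr a))) ->
  exists k m, i <= k /\ L k = Snd (inr a) m /\ reply m0 m.
Proof.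
  intros Hnf Hk0 Hr0 Hin.
  destruct (eventually_occurs (E := fun l => exists m, l = Snd (inr a) m /\ reply m0 m)
              (R := fun k => In m0 (unresp (st k (inr a)))) (i := i) Hnf)
    as (k & Hik & m & Hl & Hreply); eauto.
  - intros k l k' Hstep Hl Hk; destruct (unresp_step Hstep Hk); tauto.
  - intros k Hk Hup.
    pose proof (ready_promise Hk Hk0 Hr0) as Hready.
    exists (Snd (inr a) (Msg (inr a) (ms m0) K1b (mb m0) None (acc (st k (inr a))))).
    split; [eexists; split; [reflexivity | repeat split; auto] |].
    split; [eexists; left; reflexivity | exact (snd_enabled Hup Hready)].
  - apply (proj1 (proj2 Hnf) i); eexists; exact (ready_promise Hin Hk0 Hr0).
Qed.

Lemma promise_eventually p a b i :
  nonfaulty lt T L (inl p) -> nonfaulty lt T L (inr a) -> P1 lt T L b ->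
  ready lt (st (T i) (inl p)) (inl p) (msg1a p a b) ->
  exists j, has_promise (st (T j) (inl p)) p a b.
Proof.
  intros Hp Ha HP1 Hready.
  destruct (prepare_sent Hp Hready) as (k1 & _ & E1).
  pose proof (path_TL k1) as Hsent; rewrite E1 in Hsent.
  destruct (message_received (m := msg1a p a b) Ha eq_refl (proj2 (sent_en_route Hsent)))
    as (k2 & _ & E2).
  assert (Hrecorded : In (msg1a p a b) (unresp (st (T (S k2)) (inr a)))).
  { pose proof (HP1 k2 a _ E2 eq_refl eq_refl) as Hgt.
    pose proof (path_TL k2) as Hstep; rewrite E2 in Hstep.
    destruct Hstep as (_ & _ & _ & [[_ ->] | [Hngt _]] & _);
      [left; reflexivity | contradiction]. }
  destruct (promise_sent (m0 := msg1a p a b) Ha eq_refl eq_refl Hrecorded)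
    as (k3 & m & _ & E3 & Hr & Hb & [[_ Hk] | [Hk _]]); [| discriminate].
  pose proof (path_TL k3) as Hpromise; rewrite E3 in Hpromise.
  destruct (sent_en_route Hpromise) as [Hms Hmu].
  destruct (message_received Hp Hr Hmu) as (k4 & _ & E4).
  exists (S k4), m.
  pose proof (path_TL k4) as Hstep; rewrite E4 in Hstep.
  destruct Hstep as (_ & _ & _ & -> & _); simpl; tauto.
Qed.

Lemma has_promise_mono p a b j j' :
  j <= j' -> has_promise (st (T j) (inl p)) p a b ->
  has_promise (st (T j') (inl p)) p a b.
Proof.
  induction 1 as [| j' _ IH]; auto.
  intros Hj; destruct (IH Hj) as (m & Hin & Hm).
  exists m; split; [exact (proposer_unresp_step (path_TL j') Hin) | exact Hm].
Qed.

End Path.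
End Progress.

Theorem lemma1 {P A B V : Type} (lt : B -> B -> Prop)
  (lt_strict : StrictOrder lt)
  (lt_total : forall x y : B, lt x y \/ x = y \/ lt y x)
  (T : nat -> @config P A B V) (L : nat -> @label P A B V)
  (p : P) (Q : list A) (b : B) :
  fair lt T L ->
  nonfaulty lt T L (inl p) ->
  quorum Q ->
  (forall a, In a Q -> nonfaulty lt T L (inr a)) ->
  P1 lt T L b -> P2 lt T L b ->
  forall i, (forall a, In a Q ->
               ready lt (st (T i) (inl p)) (inl p) (@msg1a P A B V p a b)) ->
  exists j, forall a, In a Q -> has_promise (st (T j) (inl p)) p a b.
Proof.
  intros Hfair Hp _ HQ HP1 _ i Hready; clear lt_strict lt_total.
  induction Q as [| a Q IH]; [exists 0; intros a [] |].
  destruct IH as [j HQj];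
    [intros a' Ha'; apply HQ, in_cons, Ha' | intros a' Ha'; apply Hready, in_cons, Ha' |].
  destruct (promise_eventually Hfair Hp (HQ a (in_eq a Q)) HP1 (Hready a (in_eq a Q)))
    as [ja Hja].
  exists (Nat.max j ja); intros a' [<- | Ha'];
    [apply (has_promise_mono Hfair (j := ja)) | apply (has_promise_mono Hfair (j := j))];
    auto; lia.
Qed.
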